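(* Let $k$ be a positive integer and let $G$ be a DPG-$[k,2]$-colorable graph. Then: (1) $G$ is DP-$k$-colorable, and thus $k$-choosable. (2) $G$ is DP-vertex-$\lceil k/2\rceil$-arborable. (3) Let $d$ be an integer with $2d>k$ and $d\le k$. If $L$ is a $d$-assignment of $G$ (colors being positive integers, so that $1,2,\dots,2d-k$ are colors), then $G$ has an $L$-forested-coloring such that $C(i)$ is an independent set for each $i\in\{1,\dots,2d-k\}$.
   Context: All graphs are finite, simple, undirected. An assignment $L$ gives each vertex $v$ a set $L(v)$ of colors (positive integers); $k$-assignment means $|L(v)|=k$; $G$ is $k$-choosable if every $k$-assignment admits a proper coloring from the lists. A cover $H$ of $G$ w.r.t. $L$ has vertex set $\{(u,c):c\in L(u)\}$, each $\{u\}\times L(u)$ is a clique, for each edge $uv$ the edges between $\{u\}\times L(u)$ and $\{v\}\times L(v)$ form a matching, and there are no such edges for non-adjacent $u,v$. A representative set contains exactly one vertex of each $\{v\}\times L(v)$. DP-coloring: representative $R$ with $H[R]$ edgeless; DP-$k$-colorable: exists for every $k$-assignment and cover. DP-forested-coloring: representative $R$ with $H[R]$ a forest; DP-vertex-$k$-arborable: exists for every $k$-assignment and cover. $L$-forested-coloring: $c(v)\in L(v)$ with every color class inducing a forest; $C(i)$ is the set of vertices colored $i$. For $F=(f_1,\dots,f_s)$, $f_i:V(G)\to\mathbb{Z}_{\ge0}$, $|f(v)|=\sum_i f_i(v)$; a DP-$F$-coloring of $(G,H)$ is a representative set $R$ admitting an ordering in which each $(v,i)\in R$ has fewer than $f_i(v)$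 $H$-neighbors among earlier elements of $R$. $G$ is DPG-$[k,t]$-colorable if for every $s\ge1$, every cover $H$ w.r.t. $L(v)=\{1,\dots,s\}$ for all $v$, and every $F$ with $|f(v)|\ge k$ and $f_i(v)\le t$ for all $v,i$, $(G,H)$ has a DP-$F$-coloring. *)

From mathcomp Require Import all_boot.

Set Implicit Arguments.
Unset Strict Implicit.
Unset Printing Implicit Defensive.

Definition simple_graph (T : finType) (e : rel T) : Prop :=
  symmetric e /\ irreflexive e.

(* An assignment L gives each vertex a finite set of colors (positive
   integers), represented as a duplicate-free list. *)
Definition assignment (T : finType) (L : T -> seq nat) : Prop :=
  forall v, uniq (L v) /\ all (fun c => 0 < c) (L v).

Definition k_assignment (T : finType) (k : nat) (L : T -> seq nat) : Prop :=
  assignment L /\ forall v, size (L v) = k.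

(* A cover H of G w.r.t. L.  Its vertex set is {(u,c) : c in L u}; each
   {u} x L(u) is a clique (implicit).  M u c v d holds iff there is an edge
   between (u,c) and (v,d) with u <> v; these edges exist only for adjacent
   u, v, and for each edge uv they form a matching. *)
Definition cover (T : finType) (e : rel T) (L : T -> seq nat)
    (M : T -> nat -> T -> nat -> bool) : Prop :=
  [/\ forall u c v d, M u c v d -> [&& e u v, c \in L u & d \in L v],
      forall u c v d, M u c v d = M v d u c &
      forall u c v d1 d2, M u c v d1 -> M u c v d2 -> d1 = d2].

(* A representative set R of H, given as the choice function r : one
   vertex (v, r v) of each {v} x L(v). *)
Definition representative (T : finType) (L : T -> seq nat) (r : T -> nat) :=
  forall v, r v \in L v.

(* The graph H[R] on the chosen vertices, indexed by T. *)
Definition induced_rep (T : finType) (M : T -> nat -> T -> nat -> bool)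
    (r : T -> nat) : rel T :=
  fun u v => M u (r u) v (r v).

Definition forest (T : finType) (g : rel T) : Prop :=
  ~ exists s : seq T, [&& uniq s, 2 < size s & cycle g s].

Definition DP_colorable (T : finType) (e : rel T) (k : nat) : Prop :=
  forall L M, k_assignment k L -> cover e L M ->
  exists r, representative L r /\ forall u v, ~~ induced_rep M r u v.

Definition choosable (T : finType) (e : rel T) (k : nat) : Prop :=
  forall L, k_assignment k L ->
  exists c : T -> nat, (forall v, c v \in L v) /\
    forall u v, e u v -> c u != c v.

Definition DP_vertex_arborable (T : finType) (e : rel T) (k : nat) : Prop :=
  forall L M, k_assignment k L -> cover e L M ->
  exists r, representative L r /\ forest (induced_rep M r).

Definition class_graph (T : finType) (e : rel T) (c : T -> nat) (i : nat)
  : rel T := fun x y => [&& e x y, c x == i & c y == i].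

Definition L_forested_coloring (T : finType) (e : rel T) (L : T -> seq nat)
    (c : T -> nat) : Prop :=
  (forall v, c v \in L v) /\ forall i, forest (class_graph e c i).

Definition independent_class (T : finType) (e : rel T) (c : T -> nat)
    (i : nat) : Prop :=
  forall x y, c x = i -> c y = i -> ~~ e x y.

Definition full_assignment (T : finType) (s : nat) : T -> seq nat :=
  fun _ => iota 1 s.

(* DP-F-coloring of (G,H) with H a cover w.r.t. L(v) = {1..s}, where
   F = (f_1, ..., f_s) is given by f i v = f_i(v) (for 1 <= i <= s):
   a representative set R (given by r) admitting an ordering (a listing
   ord of all vertices, each exactly once) in which each (v, r v) has
   fewer than f_{r v}(v) H-neighbours among the earlier elements of R. *)
Definition DP_F_coloring (T : finType) (s : nat)
    (M : T -> nat -> T -> nat -> bool) (f : nat -> T -> nat) : Prop :=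
  exists r : T -> nat, representative (@full_assignment T s) r /\
  exists ord : seq T, perm_eq ord (enum T) /\
    forall v : T,
      count (fun u => M v (r v) u (r u)) (take (index v ord) ord)
        < f (r v) v.

Definition DPG_colorable (T : finType) (e : rel T) (k t : nat) : Prop :=
  forall (s : nat) (M : T -> nat -> T -> nat -> bool) (f : nat -> T -> nat),
    1 <= s ->
    cover e (@full_assignment T s) M ->
    (forall v, k <= \sum_(1 <= i < s.+1) f i v) ->
    (forall v i, 1 <= i <= s -> f i v <= t) ->
    DP_F_coloring s M f.

(** Relabel the colours of every list [L v] by their positions [1..|L v|]:
    a cover of [G] with respect to [L] becomes a cover with respect to
    [{1,...,s}], and weights [w v c] on colours become the functions
    [f_j(v) = w v (j-th colour of L v)].  A DP-F-coloring is then a choice of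
    colours together with an ordering of the vertices in which every vertex [v]
    has fewer than [w v (c v)] earlier cover-neighbours.  With all weights [1]
    no two chosen vertices are adjacent (the later one would have an earlier
    neighbour), which gives (1); with all weights [2] every cycle has a last
    vertex with two earlier neighbours, which gives (2); and giving weight [1]
    to the colours [1..2d-k] and [2] to the others, on the cover encoding
    list coloring, gives (3), since a [d]-list contains at most [2d-k] of
    these colours and so its total weight is at least [k]. *)
From Pilot Require Import Defs.
From mathcomp Require Import all_boot zify.

Set Implicit Arguments.
Unset Strict Implicit.
Unset Printing Implicit Defensive.

Definition earlier (T : eqType) (ord : seq T) (v : T) := take (index v ord) ord.

Definition degenerate_order (T : finType) (P : rel T) (b : T -> nat)
    (ord : seq T) :=
  perm_eq ord (enum T) /\ forall v, count (P v) (earlier ord v) < b v.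

Section Orderings.
Variables (T : finType) (ord : seq T).
Hypothesis ord_enum : perm_eq ord (enum T).

Lemma mem_ord x : x \in ord.
Proof. by rewrite (perm_mem ord_enum) mem_enum. Qed.

Lemma earlier_total x y :
  x != y -> x \in earlier ord y \/ y \in earlier ord x.
Proof.
move=> nxy; rewrite /earlier !in_take ?mem_ord //.
case: (ltngtP (index x ord) (index y ord)) => [||/(index_inj x)];
  try by [left | right].
by move=> /(_ (mem_ord x) (mem_ord y)) exy; rewrite exy eqxx in nxy.
Qed.

Lemma last_in_order (A : seq T) x0 :
  x0 \in A ->
  exists2 w, w \in A & {in A, forall x, x != w -> x \in earlier ord w}.
Proof.
move=> x0A; case: (arg_maxnP (fun x => index x ord) x0A) => w wA w_max.
exists w => // x xA nxw.
rewrite /earlier in_take ?mem_ord // ltn_neqAle [_ <= _](w_max x xA) andbT.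
by apply: contra nxw => /eqP /(index_inj x (mem_ord x) (mem_ord w)) ->.
Qed.

End Orderings.

Lemma cycle_nbrs (T : eqType) (g : rel T) (s : seq T) x :
  uniq s -> 2 < size s -> cycle g s -> x \in s ->
  exists a b, [/\ uniq [:: x; a; b], {subset [:: a; b] <= s}, g x a & g b x].
Proof.
move=> us s_gt2 gs xs; have := rot_index xs; set t := _ ++ _ => s_rot.
have ut : uniq (x :: t) by rewrite -s_rot rot_uniq.
have gt : cycle g (x :: t) by rewrite -s_rot rot_cycle.
have t_gt1 : 1 < size t by move: s_gt2; rewrite -(size_rot (index x s)) s_rot.
have t_s z : z \in t -> z \in s.
  by move=> zt; rewrite -(mem_rot (index x s)) s_rot inE zt orbT.
case: t t_gt1 ut gt t_s {s_rot} => [|a t] //; case/lastP: t => [|t b] // _.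
rewrite /= rcons_path last_rcons !inE !mem_rcons !inE !negb_or.
move=> /andP [/and3P [nxa nxb _] /andP [/andP [nab _] _]] /and3P [gxa _ gbx] t_s.
exists a, b; split => //=; first by rewrite !inE negb_or nxa nxb nab.
move=> z /[!inE] /orP [] /eqP ->; apply: t_s;
  by rewrite !inE ?mem_rcons ?inE eqxx ?orbT.
Qed.

Section DegenerateOrder.
Variables (T : finType) (P : rel T) (b : T -> nat) (ord : seq T).
Hypothesis deg : degenerate_order P b ord.

Lemma degenerate_earlier_nbrs x (A : seq T) :
  uniq A -> {subset A <= earlier ord x} -> all (P x) A -> size A < b x.
Proof.
move=> uA A_earlier /allP PA; apply: leq_ltn_trans (deg.2 x).
rewrite -size_filter; apply: uniq_leq_size => // y yA.
by rewrite mem_filter PA ?A_earlier.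
Qed.

Lemma degenerate1_asym x y :
  b x <= 1 -> b y <= 1 -> x != y -> P x y -> ~~ P y x.
Proof.
move=> bx1 by1 nxy Pxy; apply/negP => Pyx.
have [xy | yx] := earlier_total deg.1 nxy.
- suff: 1 < b y by rewrite ltnNge by1.
  apply: (@degenerate_earlier_nbrs y [:: x]) => //= [z /[1!inE] /eqP ->|];
    by rewrite ?Pyx.
- suff: 1 < b x by rewrite ltnNge bx1.
  apply: (@degenerate_earlier_nbrs x [:: y]) => //= [z /[1!inE] /eqP ->|];
    by rewrite ?Pxy.
Qed.

Lemma degenerate2_forest (g : rel T) :
  (forall v, b v <= 2) -> (forall x y, g x y -> P x y && P y x) -> forest g.
Proof.
move=> b_le2 gP [[|x s] /and3P [us s_gt2 gs]] //.
have [w ws w_last] := last_in_order deg.1 (mem_head x s).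
have [a [c [/= /[!inE] /and3P [/norP [nwa nwc] nac _] acs gwa gcw]]] :=
  cycle_nbrs us s_gt2 gs ws.
suff: 2 < b w by rewrite ltnNge b_le2.
apply: (@degenerate_earlier_nbrs w [:: a; c]) => /=.
- by rewrite inE nac.
- move=> z zac; apply: w_last; first exact: acs.
  by move: zac; rewrite !inE => /orP [] /eqP ->; rewrite eq_sym.
- by rewrite (andP (gP _ _ gwa)).1 (andP (gP _ _ gcw)).2.
Qed.

End DegenerateOrder.

Section Relabel.
Variables (T : finType) (e : rel T) (n : nat) (L : T -> seq nat).
Variable M : T -> nat -> T -> nat -> bool.
Hypothesis L_assign : k_assignment n L.

(* Colour positions are 1-based, as the colours of [full_assignment]. *)
Definition lab v j := nth 0 (L v) j.-1.

Definition relab u j v j' :=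
  [&& M u (lab u j) v (lab v j'), 0 < j <= n & 0 < j' <= n].

Lemma relab_cover :
  Defs.cover e L M -> Defs.cover e (@full_assignment T n) relab.
Proof.
have [L_set L_size] := L_assign; move=> [M_e M_sym M_match]; split.
- move=> u c v d /and3P [/M_e /and3P [-> _ _] c_n d_n].
  by rewrite /full_assignment !mem_iota; lia.
- by move=> u c v d; rewrite /relab M_sym; congr (_ && _); exact: andbC.
- move=> u c v d1 d2 /and3P [M1 _ d1_n] /and3P [M2 _ d2_n].
  move: (M_match _ _ _ _ _ M1 M2) => /eqP.
  rewrite /lab nth_uniq ?L_size ?(L_set v).1; lia.
Qed.

Lemma lab_representative r :
  representative (@full_assignment T n) r ->
  representative L (fun v => lab v (r v)).
Proof.
move=> r_full v; rewrite /lab mem_nth // L_assign.2.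
by move: (r_full v); rewrite /full_assignment mem_iota; lia.
Qed.

Lemma relab_induced r : representative (@full_assignment T n) r ->
  induced_rep relab r =2 induced_rep M (fun v => lab v (r v)).
Proof.
move=> r_full u v; rewrite /induced_rep /relab.
move: (r_full u) (r_full v); rewrite /full_assignment !mem_iota => ru rv.
by rewrite andbC; lia.
Qed.

Lemma sum_lab (w : T -> nat -> nat) v :
  \sum_(1 <= j < n.+1) w v (lab v j) = \sum_(c <- L v) w v c.
Proof. by rewrite big_add1 [RHS](big_nth 0) L_assign.2. Qed.

End Relabel.

Lemma DPG_colorable_degenerate (T : finType) (e : rel T) k n L M
    (w : T -> nat -> nat) :
  DPG_colorable e k 2 -> 0 < n -> k_assignment n L -> Defs.cover e L M ->
  (forall v, k <= \sum_(c <- L v) w v c) -> (forall v c, w v c <= 2) ->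
  exists2 c, representative L c &
    exists ord, degenerate_order (induced_rep M c) (fun v => w v (c v)) ord.
Proof.
move=> DPG n_gt0 L_assign M_cover w_sum w_le2.
have [||r [r_full [ord [ord_enum r_deg]]]] :=
  DPG n (relab n L M) (fun j v => w v (lab L v j)) n_gt0
    (relab_cover L_assign M_cover).
- by move=> v; rewrite sum_lab.
- by [].
exists (fun v => lab L v (r v)); first exact: (lab_representative L_assign r_full).
exists ord; split=> // v; rewrite -(eq_count (relab_induced L M r_full v)).
exact: r_deg.
Qed.

(* [(u, c)] is matched with [(v, c)]: the DP-colourings of this cover are the
   proper [L]-colourings. *)
Definition list_cover (T : finType) (e : rel T) (L : T -> seq nat) u c v d :=
  [&& e u v, c == d, c \in L u & d \in L v].

Lemma list_cover_cover (T : finType) (e : rel T) L :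
  symmetric e -> Defs.cover e L (list_cover e L).
Proof.
move=> e_sym; split.
- by move=> u c v d /and4P [-> _ -> ->].
- move=> u c v d; rewrite /list_cover e_sym eq_sym.
  by do 2!congr (_ && _); exact: andbC.
- by move=> u c v d1 d2 /and4P [_ /eqP <- _ _] /and4P [_ /eqP <- _ _].
Qed.

Lemma induced_list_cover (T : finType) (e : rel T) L c :
  representative L c ->
  induced_rep (list_cover e L) c =2 fun u v => e u v && (c u == c v).
Proof. by move=> c_L u v; rewrite /induced_rep /list_cover !c_L !andbT. Qed.

Lemma DP_colorable_choosable (T : finType) (e : rel T) k :
  symmetric e -> DP_colorable e k -> choosable e k.
Proof.
move=> e_sym DP L L_assign.
have [c [c_L c_indep]] := DP L _ L_assign (list_cover_cover L e_sym).
exists c; split=> // u v euv; move: (c_indep u v).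
by rewrite induced_list_cover // euv.
Qed.

Lemma induced_rep_sym (T : finType) (e : rel T) L M (c : T -> nat) :
  Defs.cover e L M -> forall u v, induced_rep M c u v = induced_rep M c v u.
Proof. by move=> [_ M_sym _] u v; exact: M_sym. Qed.

Lemma DPG_DP_colorable (T : finType) (e : rel T) k :
  irreflexive e -> 0 < k -> DPG_colorable e k 2 -> DP_colorable e k.
Proof.
move=> e_irr k_gt0 DPG L M L_assign M_cover.
have [||c c_L [ord c_deg]] := DPG_colorable_degenerate (w := fun _ _ => 1)
  DPG k_gt0 L_assign M_cover.
- by move=> v; rewrite sum1_size L_assign.2.
- by [].
exists c; split=> // u v; apply/negP => Muv.
have [uv | nuv] := eqVneq u v.
  by have [M_e _ _] := M_cover; move: Muv => /M_e; rewrite uv e_irr.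
move: (degenerate1_asym c_deg (leqnn 1) (leqnn 1) nuv Muv).
by rewrite (induced_rep_sym _ M_cover) Muv.
Qed.

Lemma DPG_DP_vertex_arborable (T : finType) (e : rel T) k :
  0 < k -> DPG_colorable e k 2 -> DP_vertex_arborable e (uphalf k).
Proof.
move=> k_gt0 DPG L M L_assign M_cover.
have [|||c c_L [ord c_deg]] := DPG_colorable_degenerate (w := fun _ _ => 2)
  DPG _ L_assign M_cover.
- by rewrite uphalf_gt0.
- by move=> v; rewrite big_const_seq count_predT iter_addn_0 L_assign.2; lia.
- by [].
exists c; split=> //; apply: (degenerate2_forest c_deg) => // x y Mxy.
by rewrite [X in _ && X](induced_rep_sym _ M_cover) andbb.
Qed.

Lemma sum_small_colors_weight (s : seq nat) p :
  uniq s -> all (fun c => 0 < c) s ->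
  (size s).*2 - p <= \sum_(c <- s) (p < c).+1.
Proof.
move=> s_uniq s_pos.
have count_small : count (leq^~ p) s <= p.
  rewrite -size_filter -[p in _ <= p](size_iota 1 p).
  apply: uniq_leq_size; first exact: filter_uniq.
  move=> c; rewrite mem_filter mem_iota => /andP [c_p cs].
  by have := allP s_pos c cs; lia.
have sum_count : \sum_(c <- s) (p < c).+1 + count (leq^~ p) s = (size s).*2.
  elim: s {s_uniq s_pos count_small} => [|c s IH]; first by rewrite big_nil.
  by rewrite big_cons /=; case: (ltnP p c) IH; lia.
lia.
Qed.

Lemma DPG_forested_coloring (T : finType) (e : rel T) k d L :
  simple_graph e -> DPG_colorable e k 2 -> k < d.*2 -> k_assignment d L ->
  exists c, L_forested_coloring e L c /\
    forall i, 1 <= i <= d.*2 - k -> independent_class e c i.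
Proof.
move=> [e_sym e_irr] DPG k_lt L_assign; set p := d.*2 - k.
have [|||c c_L [ord c_deg]] :=
  DPG_colorable_degenerate (w := fun _ c => (p < c).+1)
    DPG _ L_assign (list_cover_cover L e_sym).
- lia.
- move=> v; have [L_uniq L_pos] := L_assign.1 v.
  by have := sum_small_colors_weight p L_uniq L_pos; rewrite L_assign.2 /p; lia.
- by move=> _ c; case: (p < c).
have class_edge i x y : class_graph e c i x y ->
    induced_rep (list_cover e L) c x y && induced_rep (list_cover e L) c y x.
  move=> /and3P [exy /eqP cx /eqP cy]; have eyx : e y x by rewrite e_sym.
  by rewrite !induced_list_cover // exy eyx cx cy eqxx.
exists c; split; first split=> // i.
- by apply: (degenerate2_forest c_deg _ (@class_edge i)) => v; case: (p < c v).
- move=> i /andP [_]; rewrite -/p => i_p x y cx cy; apply/negP => exy.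
  have nxy : x != y by apply: contraTneq exy => ->; rewrite e_irr.
  have /class_edge /andP [Pxy Pyx] : class_graph e c i x y.
    by rewrite /class_graph exy cx cy eqxx.
  have w1 z : c z = i -> (p < c z).+1 <= 1.
    by move=> ->; rewrite [p < i]ltnNge i_p.
  by move: (degenerate1_asym c_deg (w1 x cx) (w1 y cy) nxy Pxy); rewrite Pyx.
Qed.

Unset Implicit Arguments.
Set Strict Implicit.

Theorem lemma1 (T : finType) (e : rel T) (k : nat) :
  simple_graph e -> 0 < k -> DPG_colorable e k 2 ->
  [/\ DP_colorable e k /\ choosable e k,
      DP_vertex_arborable e (uphalf k) &
      forall d : nat, k < d.*2 -> d <= k ->
      forall L : T -> seq nat, k_assignment d L ->
      exists c : T -> nat, L_forested_coloring e L c /\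
        forall i, 1 <= i <= d.*2 - k -> independent_class e c i].
Proof.
move=> G_simple k_gt0 DPG; have [e_sym e_irr] := G_simple.
have DP := DPG_DP_colorable e_irr k_gt0 DPG.
split; first by split; last exact: DP_colorable_choosable.
- exact: DPG_DP_vertex_arborable.
- by move=> d k_lt _ L; exact: DPG_forested_coloring.
Qed.
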